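(* Let $\alpha\ge1$ and let $\Phi_\alpha^*(\xi)=\sup_{z\in\mathbb R}\{\xi z-\Phi_\alpha(z)\}$ be the Legendre transform of $\Phi_\alpha$. With $\tilde c_\alpha:=\big(\tfrac{2}{\alpha^2}\big)^{1/(\alpha-1)}\tfrac{\alpha-1}{\alpha}$ (for $\alpha>1$), for all $\xi\in\mathbb R$: (1) if $\alpha=1$: $\Phi_1^*(\xi)\le e^{\xi}-\xi-1$; (2) if $\alpha\in(1,2]$: $\Phi_\alpha^*(\xi)\le\max\big\{\tilde c_\alpha|\xi|^{\alpha/(\alpha-1)},\tfrac1{2\alpha}\xi^2\big\}$; (3) if $\alpha\ge2$: $\Phi_\alpha^*(\xi)\le\tilde c_\alpha|\xi|^{\alpha/(\alpha-1)}$. Moreover, for all $\alpha\ge1$, $\Phi_\alpha^*(\xi)\le\frac1{2\alpha}\xi^2$ whenever $|\xi|\le\alpha$.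
   Context: For $\alpha\ge1$, $\Phi_\alpha(z)=\big((z+1)^\alpha-1\big)\log\big((z+1)^\alpha\big)$ for $z>-1$ and $\Phi_\alpha(z)=+\infty$ for $z\le-1$. *)

From HB Require Import structures.
From mathcomp Require Import all_boot all_order all_algebra.
From mathcomp Require Import all_classical all_reals all_analysis.
Set Implicit Arguments. Unset Strict Implicit. Unset Printing Implicit Defensive.
Import Order.TTheory GRing.Theory Num.Theory.
Local Open Scope ring_scope.

Definition Phi {R : realType} (alpha z : R) : \bar R :=
  if -1 < z then ((((z + 1) `^ alpha) - 1) * ln ((z + 1) `^ alpha))%:E
  else +oo%E.

Definition Phistar {R : realType} (alpha xi : R) : \bar R :=
  ereal_sup [set ((xi * z)%:E - Phi alpha z)%E | z in [set: R]]%classic.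

Definition ctilde {R : realType} (alpha : R) : R :=
  (2 / alpha ^+ 2) `^ (1 / (alpha - 1)) * ((alpha - 1) / alpha).

(* Write l := ln (z + 1).  On z > -1, Phi_alpha(z) = ((z+1)^alpha - 1) * alpha * l, and
   (z+1)^alpha - 1 lies beyond z on the side of 0 where l lies, so Phi_alpha(z) >= alpha * z * l.
   Elementary bounds on ln give z * l >= z^2/2 on (-1, 1] and z * l >= z - 1/2 on [1, +oo);
   on [1, +oo) also Phi_alpha(z) >= alpha/2 * z^alpha, as (z+1)^alpha >= z^alpha + 1 and l >= ln 2.
   Bounding xi z - Phi_alpha(z) pointwise then reduces every estimate to the conjugates of
   alpha z^2/2 (completing the square) and of alpha/2 |z|^alpha (Young's inequality, whose
   conjugate constant is ctilde alpha).  For alpha = 1, e^xi - xi - 1 bounds xi z - z l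
   because e^xi = (z+1) e^(xi - l) >= (z+1)(1 + xi - l) and l <= z. *)
From HB Require Import structures.
From mathcomp Require Import all_boot all_order all_algebra.
From mathcomp Require Import all_classical all_reals all_analysis.
From mathcomp Require Import ring lra.
Set Implicit Arguments.
Unset Strict Implicit.
Import Order.TTheory GRing.Theory Num.Theory.
Local Open Scope ring_scope.

Section LegendreBounds.
Variable R : realType.
Implicit Types a alpha u xi z : R.

Lemma ln_le_subr1 u : 0 < u -> ln u <= u - 1.
Proof. by move=> u0; have := @le_ln1Dx R (u - 1); rewrite addrCA subrr addr0; apply; lra. Qed.

Lemma subr1V_le_ln u : 0 < u -> 1 - u^-1 <= ln u.
Proof.
move=> u0; have uV0 : 0 < u^-1 by rewrite invr_gt0.
by have := ln_le_subr1 uV0; rewrite lnV ?posrE //; lra.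
Qed.

Lemma ln2_ge_half : 1 / 2 <= ln (2 : R).
Proof. by have := @subr1V_le_ln 2 ltac:(lra); lra. Qed.

Lemma mulr_ln1D_ge_sqr z : -1 < z -> z <= 1 -> z ^+ 2 / 2 <= z * ln (z + 1).
Proof.
move=> zgt zle; have u0 : 0 < z + 1 by lra.
have [z0|z0] := leP z 0.
  have := ln_le_subr1 u0; rewrite expr2; nra.
have hV : (z + 1) * (z + 1)^-1 = 1 by rewrite mulfV // gt_eqF.
have hV0 : 0 < (z + 1)^-1 by rewrite invr_gt0.
have := subr1V_le_ln u0; rewrite expr2; nra.
Qed.

Lemma mulr_ln1D_ge_lin z : 1 <= z -> z - 1 / 2 <= z * ln (z + 1).
Proof.
move=> z1; have u0 : 0 < z + 1 by lra.
have ln_split : ln (z + 1) = ln 2 + ln ((z + 1) / 2).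
  by rewrite -lnM ?posrE ?divr_gt0 // mulrC divfK // pnatr_eq0.
have := @subr1V_le_ln ((z + 1) / 2) ltac:(by rewrite divr_gt0).
rewrite invf_div ln_split => ln_half.
(* AM-GM, i.e. (z - 1)^2 >= 0 *)
have amgm : z * (2 / (z + 1)) <= (z + 1) / 2.
  rewrite -subr_ge0.
  have -> : (z + 1) / 2 - z * (2 / (z + 1)) = (z - 1) ^+ 2 / (2 * (z + 1)).
    by field; rewrite gt_eqF.
  by rewrite divr_ge0 ?sqr_ge0 //; lra.
have := ln2_ge_half; nra.
Qed.

Lemma powR_addr1_ge z alpha : 0 <= z -> 1 <= alpha -> z `^ alpha + 1 <= (z + 1) `^ alpha.
Proof.
move=> z0 a1; have a10 : 0 <= alpha - 1 by lra.
rewrite -(mulr_powRB1 z0 (_ : 0 < alpha)); last lra.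
rewrite -(mulr_powRB1 (_ : 0 <= z + 1)); [|lra|lra].
have q_le : z `^ (alpha - 1) <= (z + 1) `^ (alpha - 1).
  by apply: ge0_ler_powR; rewrite ?nnegrE; lra.
have Q_ge1 : 1 <= (z + 1) `^ (alpha - 1).
  by have := ler_powR (_ : 1 <= z + 1) a10; rewrite powRr0; apply; lra.
nra.
Qed.

Lemma young_ctilde alpha xi z : 1 < alpha ->
  xi * z <= alpha / 2 * `|z| `^ alpha + ctilde alpha * `|xi| `^ (alpha / (alpha - 1)).
Proof.
move=> a1; have a0 : 0 < alpha by lra.
have a10 : alpha - 1 != 0 by rewrite subr_eq0 gt_eqF.
set q := alpha / (alpha - 1).
have q0 : 0 < q by rewrite divr_gt0 ?subr_gt0.
have sq0 : 0 < alpha ^+ 2 / 2 by rewrite divr_gt0 // exprn_gt0.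
(* Young's inequality for (|z| lam) (|xi| / lam) with lam^alpha = alpha^2 / 2 *)
set lam := (alpha ^+ 2 / 2) `^ alpha^-1.
set mu := (2 / alpha ^+ 2) `^ alpha^-1.
have lam_mu : lam * mu = 1.
  rewrite -powRM ?(ltW sq0) ?divr_ge0 ?sqr_ge0 //.
  have a2 : alpha ^+ 2 != 0 by rewrite expf_neq0 // gt_eqF.
  by rewrite mulrA divfK // divff ?pnatr_eq0 // (powR1 R).
have lamA : lam `^ alpha = alpha ^+ 2 / 2.
  by rewrite -powRrM mulVf ?gt_eqF // powRr1 // ltW.
have muq : mu `^ q = (2 / alpha ^+ 2) `^ (1 / (alpha - 1)).
  by rewrite -powRrM /q; congr (_ `^ _); field; rewrite a10 gt_eqF.
have pq : alpha^-1 + q^-1 = 1 by rewrite /q invf_div; field; rewrite gt_eqF.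
have := @conjugate_powR R (`|z| * lam) (`|xi| * mu) alpha q
  (mulr_ge0 (normr_ge0 _) (powR_ge0 _ _)) (mulr_ge0 (normr_ge0 _) (powR_ge0 _ _)) a0 q0 pq.
rewrite !powRM ?normr_ge0 ?powR_ge0 // lamA muq.
have -> : `|z| * lam * (`|xi| * mu) = `|xi * z|.
  by rewrite normrM mulrACA lam_mu mulr1 mulrC.
move=> /(le_trans (ler_norm _)) /le_trans; apply.
rewrite /ctilde /q invf_div; apply: lerD; rewrite le_eqVlt; apply/orP; left; apply/eqP.
  by field; rewrite gt_eqF.
ring.
Qed.

Lemma sqr_conjugate_le a xi z : 0 < a -> xi * z - a * z ^+ 2 / 2 <= xi ^+ 2 / (2 * a).
Proof.
move=> a0; rewrite -subr_ge0.
have -> : xi ^+ 2 / (2 * a) - (xi * z - a * z ^+ 2 / 2) = (xi - a * z) ^+ 2 / (2 * a).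
  by field; rewrite gt_eqF.
by rewrite divr_ge0 ?sqr_ge0 //; lra.
Qed.

Lemma powR_le_sqr z alpha : 2 <= alpha -> `|z| <= 1 -> `|z| `^ alpha <= z ^+ 2.
Proof.
move=> a2 z1; have [->|nz] := eqVneq z 0.
  by rewrite normr0 powR0 ?expr0n //= gt_eqF //; lra.
have z0 : 0 < `|z| by rewrite normr_gt0.
have := @ger_powR R `|z| ltac:(by apply/andP) 2 alpha a2.
by rewrite powR_mulrn ?normr_ge0 // real_normK ?num_real.
Qed.

(* Phi on its domain z > -1, with ln ((z + 1) `^ alpha) expanded *)
Definition Phi_fin alpha z : R := ((z + 1) `^ alpha - 1) * (alpha * ln (z + 1)).

Lemma Phistar_le_fin alpha xi (B : R) :
  (forall z, -1 < z -> xi * z - Phi_fin alpha z <= B) -> (Phistar alpha xi <= B%:E)%E.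
Proof.
move=> H; apply: ge_ereal_sup => _ [z _ <-]; rewrite /Phi; case: ifPn => [z1|_].
  by rewrite -EFinB lee_fin ln_powR; exact: H.
by rewrite leNye.
Qed.

Lemma Phi_fin_ge_mulr_ln alpha z : 1 <= alpha -> -1 < z ->
  alpha * (z * ln (z + 1)) <= Phi_fin alpha z.
Proof.
move=> a1 z1; rewrite /Phi_fin [leRHS]mulrCA; apply: ler_wpM2l; first lra.
have [z0|z0] := leP z 0.
  have := @ge1r_powR R (z + 1) alpha ltac:(apply/andP; split; lra) a1.
  have : ln (z + 1) <= 0 by apply: ln_le0; lra.
  nra.
have := @le1r_powR R (z + 1) alpha ltac:(lra) a1.
have : 0 <= ln (z + 1) by apply: ln_ge0; lra.
nra.
Qed.

Lemma Phi_fin_ge_sqr alpha z : 1 <= alpha -> -1 < z -> z <= 1 ->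
  alpha * z ^+ 2 / 2 <= Phi_fin alpha z.
Proof.
move=> a1 zgt zle; apply: le_trans (Phi_fin_ge_mulr_ln a1 zgt).
by rewrite -mulrA; apply: ler_wpM2l; [lra | exact: mulr_ln1D_ge_sqr].
Qed.

Lemma Phi_fin_ge_lin alpha z : 1 <= alpha -> 1 <= z ->
  alpha * z - alpha / 2 <= Phi_fin alpha z.
Proof.
move=> a1 z1; apply: le_trans (Phi_fin_ge_mulr_ln a1 _); last lra.
rewrite (_ : _ - _ = alpha * (z - 1 / 2)); last by rewrite mulrBr mul1r.
by apply: ler_wpM2l; [lra | exact: mulr_ln1D_ge_lin].
Qed.

Lemma Phi_fin_ge_powR alpha z : 1 <= alpha -> 1 <= z ->
  alpha / 2 * z `^ alpha <= Phi_fin alpha z.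
Proof.
move=> a1 z1; rewrite /Phi_fin.
have half_le_ln : 1 / 2 <= ln (z + 1).
  by apply: le_trans ln2_ge_half _; rewrite ler_ln ?posrE //; lra.
have z0 : 0 <= z by lra.
have := powR_addr1_ge z0 a1; have := powR_ge0 z alpha; move: half_le_ln.
set Z := z `^ alpha; set l := ln (z + 1) => half_le_l Z0 ZP.
have : Z * (alpha * (1 / 2)) <= Z * (alpha * l).
  by do 2 (apply: ler_wpM2l; first lra).
have : Z * (alpha * l) <= ((z + 1) `^ alpha - 1) * (alpha * l).
  by apply: ler_wpM2r; [apply: mulr_ge0 |]; lra.
lra.
Qed.

Lemma Phi_fin1_conjugate_le xi z : -1 < z -> xi * z - Phi_fin 1 z <= expR xi - xi - 1.
Proof.
move=> z1; have u0 : 0 < z + 1 by lra.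
rewrite /Phi_fin powRr1 ?(ltW u0) // mul1r.
have expR_split : expR xi = (z + 1) * expR (xi - ln (z + 1)).
  by rewrite -{1}[z + 1]lnK ?posrE // -expRD addrC subrK.
have := expR_ge1Dx (xi - ln (z + 1)); have := ln_le_subr1 u0.
rewrite expR_split; nra.
Qed.

Lemma conj_Phi_fin_le_sqr alpha xi z : 1 <= alpha -> -1 < z -> z <= 1 ->
  xi * z - Phi_fin alpha z <= xi ^+ 2 / (2 * alpha).
Proof.
move=> a1 z_gt z_le; have a0 : 0 < alpha by lra.
by have := Phi_fin_ge_sqr a1 z_gt z_le; have := sqr_conjugate_le xi z a0; lra.
Qed.

Lemma conj_Phi_fin_le_ctilde alpha xi z : 1 < alpha -> 1 <= z ->
  xi * z - Phi_fin alpha z <= ctilde alpha * `|xi| `^ (alpha / (alpha - 1)).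
Proof.
move=> a1 z1; have := Phi_fin_ge_powR (ltW a1) z1.
by have := young_ctilde xi z a1; rewrite ger0_norm; lra.
Qed.

Lemma Phistar1_le_expR xi : (Phistar 1 xi <= (expR xi - xi - 1)%:E)%E.
Proof. by apply: Phistar_le_fin => z; exact: Phi_fin1_conjugate_le. Qed.

Lemma Phistar_le_max alpha xi : 1 < alpha ->
  (Phistar alpha xi <=
    (Num.max (ctilde alpha * `|xi| `^ (alpha / (alpha - 1))) (xi ^+ 2 / (2 * alpha)))%:E)%E.
Proof.
move=> a1; apply: Phistar_le_fin => z z_gt; rewrite le_max.
have [z_le|z_ge] := leP z 1.
  by rewrite conj_Phi_fin_le_sqr ?orbT //; lra.
by rewrite conj_Phi_fin_le_ctilde //; lra.
Qed.

Lemma Phistar_le_ctilde alpha xi : 2 <= alpha ->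
  (Phistar alpha xi <= (ctilde alpha * `|xi| `^ (alpha / (alpha - 1)))%:E)%E.
Proof.
move=> a2; have a1 : 1 < alpha by lra.
apply: Phistar_le_fin => z z_gt; have [z_le|z_ge] := leP z 1; last first.
  by apply: conj_Phi_fin_le_ctilde; lra.
have := Phi_fin_ge_sqr (ltW a1) z_gt z_le; have := young_ctilde xi z a1.
have : `|z| `^ alpha <= z ^+ 2 by apply: powR_le_sqr; rewrite // ler_norml; lra.
nra.
Qed.

Lemma Phistar_le_sqr alpha xi : 1 <= alpha -> `|xi| <= alpha ->
  (Phistar alpha xi <= (xi ^+ 2 / (2 * alpha))%:E)%E.
Proof.
move=> a1 xi_le; have a0 : 0 < alpha by lra.
apply: Phistar_le_fin => z z_gt; have [z_le|z_ge] := leP z 1; first exact: conj_Phi_fin_le_sqr.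
(* alpha z - alpha/2 is the tangent to alpha z^2/2 at z = 1 *)
have := Phi_fin_ge_lin a1 (ltW z_ge); have := sqr_conjugate_le xi 1 a0.
rewrite mulr1 expr1n mulr1.
have : 0 <= (alpha - xi) * (z - 1).
  by apply: mulr_ge0; have := ler_norm xi; lra.
lra.
Qed.

End LegendreBounds.

Theorem mainTheorem8 (R : realType) (alpha : R) (ha : 1 <= alpha) :
  (alpha = 1 -> forall xi : R, (Phistar alpha xi <= (expR xi - xi - 1)%:E)%E) /\
  (1 < alpha <= 2 -> forall xi : R,
     (Phistar alpha xi <=
       (Num.max (ctilde alpha * `|xi| `^ (alpha / (alpha - 1)))
                (xi ^+ 2 / (2 * alpha)))%:E)%E) /\
  (2 <= alpha -> forall xi : R,
     (Phistar alpha xi <= (ctilde alpha * `|xi| `^ (alpha / (alpha - 1)))%:E)%E) /\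
  (forall xi : R, `|xi| <= alpha ->
     (Phistar alpha xi <= (xi ^+ 2 / (2 * alpha))%:E)%E).
Proof.
split; [|split; [|split]].
- by move=> -> xi; exact: Phistar1_le_expR.
- by move=> /andP[a1 _] xi; exact: Phistar_le_max.
- by move=> a2 xi; exact: Phistar_le_ctilde.
- by move=> xi; exact: Phistar_le_sqr.
Qed.
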